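(* Let $n\ge4$, $r_1,r_2,r_3\in\mathbb{Z}_+$ with $r_1+r_2+r_3=n-1$, and let $-1<\alpha_1<1$, $0\le\alpha_2,\alpha_3<1$ with $\alpha_1+\alpha_2+\alpha_3=1$, $r_1-1+\alpha_1\ge r_2+\alpha_2$ and $r_1-1+\alpha_1\ge r_3+1+\alpha_3$. Then $$\mathfrak{L}_n(r_1-1,r_2,r_3+1,\alpha_1,\alpha_2,\alpha_3)\le \mathfrak{L}_n(r_1,r_2,r_3,\alpha_1,\alpha_2,\alpha_3)+2^{r_2+r_3+2}+\frac{2^{r_2}}{r_1}-1+\begin{cases}2^{r_3}, & r_2\ge1,\\ 2^{r_3+1}\ln n, & r_2=0.\end{cases}$$
   Context: Points of a triangle are identified with barycentric coordinates $\lambda=(\lambda_1,\lambda_2,\lambda_3)$, $\lambda_r\ge0$, $\sum\lambda_r=1$. For an integer $n\ge1$ let $I=\{i=(i_1,i_2,i_3)\in\mathbb{Z}_+^3: i_1+i_2+i_3=n\}$, and let $l_i(\lambda)=\prod_{s=1}^{3}\frac{1}{i_s!}\prod_{t=0}^{i_s-1}(n\lambda_s-t)$ (the Lagrange fundamental polynomials for the equally spaced nodes $i/n$, $i\in I$). The Lebesgue function is $\mathcal{L}_n(\lambda)=\sum_{i\in I}|l_i(\lambda)|$. For $r_s\in\mathbb{Z}_+$ with $r_1+r_2+r_3=n-1$ and reals $\alpha_s$ with $\alpha_1+\alpha_2+\alpha_3=1$, write $\mathfrak{L}_n(r_1,r_2,r_3,\alpha_1,\alpha_2,\alpha_3)=\mathcal{L}_n(\lambda)$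 where $\lambda_s=(r_s+\alpha_s)/n$, $s=1,2,3$. *)

From Stdlib Require Import Arith Reals List.
Import ListNotations.
Open Scope R_scope.

Fixpoint falling (x : R) (k : nat) : R :=
  match k with
  | O => 1
  | S k' => falling x k' * (x - INR k')
  end.

Definition lag_factor (x : R) (k : nat) : R := falling x k / INR (fact k).

Definition lagrange_fund (n i1 i2 i3 : nat) (l1 l2 l3 : R) : R :=
  lag_factor (INR n * l1) i1 * lag_factor (INR n * l2) i2
  * lag_factor (INR n * l3) i3.

Definition lebesgue_fun (n : nat) (l1 l2 l3 : R) : R :=
  fold_right Rplus 0
    (map (fun i1 =>
       fold_right Rplus 0
         (map (fun i2 => Rabs (lagrange_fund n i1 i2 (n - i1 - i2)%nat l1 l2 l3))
              (seq 0 (S (n - i1)))))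
       (seq 0 (S n))).

Definition frakL (n r1 r2 r3 : nat) (a1 a2 a3 : R) : R :=
  lebesgue_fun n ((INR r1 + a1) / INR n) ((INR r2 + a2) / INR n)
    ((INR r3 + a3) / INR n).

From Stdlib Require Import Arith Reals Lra Lia List.
Open Scope R_scope.

(* Write x_s = r_s + a_s = n lambda_s and l(x, k) = x (x - 1) ... (x - k + 1) / k!.
   Grouping the multi-indices by i2, the Lebesgue function is the sum over i2 of
   |l(x2, i2)| times the convolution sum over i1 + i3 = n - i2 of |l(x1, i1) l(x3, i3)|.
   Pascal's rule splits each term of the convolution for (x1 - 1, x3 + 1) into two
   pieces, which telescope against the terms for (x1, x3) except at the indices
   i1 > x1, where consecutive values of l(x1 - 1, .) change sign; there the error is
   twice a term with |l(x1 - 1, i1)| <= 1 / (4 r1) and i1 >= r1.  The remaining sum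
   over i2 + i3 <= r2 + r3 + 1 is bounded through sum_(k <= K) |l(r + a, k)|
   <= 2^(r+1) + (K - r), so the whole error is at most 2^(r2+r3+2), and the other
   terms of the stated bound are nonnegative. *)

Fixpoint sumR (f : nat -> R) (K : nat) : R :=
  match K with O => 0 | S K' => sumR f K' + f K' end.

Lemma sumR_S (f : nat -> R) (K : nat) : sumR f (S K) = sumR f K + f K.
Proof. reflexivity. Qed.

Lemma fold_right_Rplus_map_seq (f : nat -> R) (K : nat) :
  fold_right Rplus 0 (map f (seq 0 K)) = sumR f K.
Proof.
  assert (shift : forall (l : list R) c,
    fold_right Rplus c l = fold_right Rplus 0 l + c).
  { induction l as [|x l IH]; intros c; simpl; [ring | rewrite IH; ring]. }
  induction K as [|K IH]; [reflexivity|].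
  rewrite seq_S, map_app, fold_right_app; simpl.
  rewrite shift, IH; ring.
Qed.

Lemma sumR_ext (f g : nat -> R) (K : nat) :
  (forall i, (i < K)%nat -> f i = g i) -> sumR f K = sumR g K.
Proof. induction K; intros H; simpl; [reflexivity|]. rewrite IHK, H; auto. Qed.

Lemma sumR_le (f g : nat -> R) (K : nat) :
  (forall i, (i < K)%nat -> f i <= g i) -> sumR f K <= sumR g K.
Proof. induction K; intros H; simpl; [lra|]. apply Rplus_le_compat; auto. Qed.

Lemma sumR_plus (f g : nat -> R) (K : nat) :
  sumR (fun i => f i + g i) K = sumR f K + sumR g K.
Proof. induction K; simpl; [ring | rewrite IHK; ring]. Qed.

Lemma sumR_scal_l (c : R) (f : nat -> R) (K : nat) :
  sumR (fun i => c * f i) K = c * sumR f K.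
Proof. induction K; simpl; [ring | rewrite IHK; ring]. Qed.

Lemma sumR_nonneg (f : nat -> R) (K : nat) :
  (forall i, (i < K)%nat -> 0 <= f i) -> 0 <= sumR f K.
Proof. induction K; intros H; simpl; [lra|]. apply Rplus_le_le_0_compat; auto. Qed.

Lemma sumR_le_length (f : nat -> R) (K L : nat) :
  (forall i, 0 <= f i) -> (K <= L)%nat -> sumR f K <= sumR f L.
Proof.
  intros Hf HKL; induction HKL as [|L _ IH]; simpl; [lra|].
  specialize (Hf L); lra.
Qed.

Lemma sumR_indicator (f : nat -> R) (K L : nat) :
  sumR (fun i => if (i <? L)%nat then f i else 0) K = sumR f (Nat.min K L).
Proof.
  induction K as [|K IH]; [reflexivity|].
  destruct (Nat.ltb_spec K L).
  - rewrite Nat.min_l by lia; simpl; rewrite IH, Nat.min_l by lia.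
    destruct (Nat.ltb_spec K L); [reflexivity | lia].
  - rewrite Nat.min_r by lia; simpl; rewrite IH, Nat.min_r by lia.
    destruct (Nat.ltb_spec K L); [lia | ring].
Qed.

Lemma sumR_shift (f : nat -> R) (K : nat) :
  sumR f (S K) = f 0%nat + sumR (fun i => f (S i)) K.
Proof. induction K; simpl in *; [ring | rewrite IHK; ring]. Qed.

Lemma sumR_rev (f : nat -> R) (m : nat) :
  sumR f (S m) = sumR (fun i => f (m - i)%nat) (S m).
Proof.
  revert f; induction m as [|m IH]; intros f; [reflexivity|].
  rewrite (sumR_shift (fun i => f (S m - i)%nat)), Nat.sub_0_r.
  change (sumR f (S (S m))) with (sumR f (S m) + f (S m)).
  rewrite IH; simpl; ring.
Qed.

Lemma sumR_zero (K : nat) : sumR (fun _ => 0) K = 0.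
Proof. induction K; simpl; [ring | rewrite IHK; ring]. Qed.

Lemma sumR_exchange (F : nat -> nat -> R) (K L : nat) :
  sumR (fun i => sumR (F i) L) K = sumR (fun j => sumR (fun i => F i j) K) L.
Proof.
  induction K as [|K IH]; simpl.
  - symmetry; apply sumR_zero.
  - rewrite IH, <- sumR_plus; reflexivity.
Qed.

Lemma sumR_triangle_exchange (F : nat -> nat -> R) (n : nat) :
  sumR (fun i => sumR (F i) (S (n - i))) (S n) =
  sumR (fun j => sumR (fun i => F i j) (S (n - j))) (S n).
Proof.
  assert (square : forall G : nat -> nat -> R,
    sumR (fun i => sumR (G i) (S (n - i))) (S n) =
    sumR (fun i => sumR (fun j => if (j <? S (n - i))%nat then G i j else 0) (S n)) (S n)).
  { intros G; apply sumR_ext; intros i Hi.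
    rewrite sumR_indicator, Nat.min_r by lia; reflexivity. }
  rewrite (square F), (square (fun j i => F i j)), sumR_exchange.
  apply sumR_ext; intros j Hj; apply sumR_ext; intros i Hi.
  destruct (Nat.ltb_spec j (S (n - i))), (Nat.ltb_spec i (S (n - j))); lia || reflexivity.
Qed.

Lemma sumR_rev_from (h : nat -> R) (r m : nat) :
  sumR (fun i => if (r <=? i)%nat then h (m - i)%nat else 0) (S m) = sumR h (S m - r).
Proof.
  rewrite sumR_rev, <- (Nat.min_r (S m) (S m - r)), <- sumR_indicator by lia.
  apply sumR_ext; intros k Hk.
  destruct (Nat.leb_spec r (m - k)), (Nat.ltb_spec k (S m - r));
    solve [lia | reflexivity | f_equal; lia].
Qed.

Lemma lag_factor_0 (x : R) : lag_factor x 0 = 1.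
Proof. unfold lag_factor; simpl; field. Qed.

Lemma lag_factor_S (x : R) (k : nat) :
  lag_factor x (S k) = lag_factor x k * (x - INR k) / (INR k + 1).
Proof.
  unfold lag_factor; simpl (falling x (S k)).
  change (fact (S k)) with (S k * fact k)%nat; rewrite mult_INR, S_INR.
  pose proof (pos_INR k); pose proof (INR_fact_neq_0 k); field; lra.
Qed.

Lemma falling_S_pred (x : R) (k : nat) : falling x (S k) = x * falling (x - 1) k.
Proof.
  induction k as [|k IH]; [simpl; ring|].
  change (falling x (S (S k))) with (falling x (S k) * (x - INR (S k))).
  rewrite IH, S_INR; simpl; ring.
Qed.

Lemma lag_factor_S_pred (x : R) (k : nat) :
  lag_factor x (S k) = x * lag_factor (x - 1) k / (INR k + 1).
Proof.
  unfold lag_factor; rewrite falling_S_pred.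
  change (fact (S k)) with (S k * fact k)%nat; rewrite mult_INR, S_INR.
  pose proof (pos_INR k); pose proof (INR_fact_neq_0 k); field; lra.
Qed.

Lemma lag_factor_pascal (x : R) (k : nat) :
  lag_factor (x + 1) (S k) = lag_factor x (S k) + lag_factor x k.
Proof.
  rewrite lag_factor_S_pred, lag_factor_S.
  replace (x + 1 - 1) with x by ring.
  pose proof (pos_INR k); field; lra.
Qed.

Lemma lag_factor_nat_gt (m k : nat) : (m < k)%nat -> lag_factor (INR m) k = 0.
Proof.
  induction k as [|k IH]; intros H; [lia|].
  rewrite lag_factor_S.
  destruct (Nat.eq_dec m k) as [->|]; [unfold Rdiv; ring|].
  rewrite IH by lia; unfold Rdiv; ring.
Qed.

Lemma lag_factor_mono (r : nat) (a : R) (k : nat) : 0 <= a <= 1 -> (k <= r)%nat ->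
  0 <= lag_factor (INR r + a) k <= lag_factor (INR r + 1) k.
Proof.
  intros Ha; induction k as [|k IH]; intros Hk; [rewrite !lag_factor_0; lra|].
  specialize (IH ltac:(lia)).
  assert (INR k + 1 <= INR r) by (rewrite <- S_INR; apply le_INR; lia).
  pose proof (pos_INR k).
  rewrite !lag_factor_S; unfold Rdiv.
  assert (0 < / (INR k + 1)) by (apply Rinv_0_lt_compat; lra).
  split.
  - apply Rmult_le_pos; [apply Rmult_le_pos|]; lra.
  - apply Rmult_le_compat_r; [lra|]; apply Rmult_le_compat; lra.
Qed.

Lemma lag_factor_nat_nonneg (m k : nat) : 0 <= lag_factor (INR m) k.
Proof.
  destruct (le_lt_dec k m) as [Hkm|Hkm].
  - pose proof (lag_factor_mono m 0 k ltac:(lra) Hkm); rewrite Rplus_0_r in *; lra.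
  - rewrite lag_factor_nat_gt by assumption; lra.
Qed.

Lemma sum_lag_factor_nat_le (m K : nat) :
  sumR (fun k => lag_factor (INR m) k) K <= 2 ^ m.
Proof.
  revert K; induction m as [|m IH]; intros K.
  - destruct K as [|K]; [simpl; lra|]; simpl pow.
    rewrite sumR_shift, lag_factor_0.
    rewrite (sumR_ext _ (fun _ => 0)) by (intros; apply (lag_factor_nat_gt 0); lia).
    rewrite sumR_zero; lra.
  - destruct K as [|K]; [simpl; pose proof (pow_le 2 m); lra|].
    assert (pascal_sum : forall L,
      sumR (fun k => lag_factor (INR m + 1) k) (S L) =
      sumR (fun k => lag_factor (INR m) k) (S L) + sumR (fun k => lag_factor (INR m) k) L).
    { induction L as [|L IHL]; [simpl; rewrite !lag_factor_0; ring|].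
      change (sumR ?f (S (S L))) with (sumR f (S L) + f (S L)).
      rewrite IHL, lag_factor_pascal; simpl; ring. }
    rewrite S_INR, pascal_sum; simpl pow.
    pose proof (IH (S K)); pose proof (IH K); lra.
Qed.

Lemma Rabs_mul_div_le (a b c : R) : 0 < c -> Rabs b <= c -> Rabs (a * b / c) <= Rabs a.
Proof.
  intros Hc Hb; unfold Rdiv.
  rewrite !Rabs_mult, Rabs_inv, (Rabs_pos_eq c) by lra.
  rewrite Rmult_assoc; pose proof (Rabs_pos a).
  rewrite <- (Rmult_1_r (Rabs a)) at 2; apply Rmult_le_compat_l; [lra|].
  pose proof (Rabs_pos b); apply (Rmult_le_reg_r c); [lra|].
  rewrite Rmult_assoc, Rinv_l; lra.
Qed.

Lemma Rabs_lag_factor_le_1 (k : nat) (x : R) : 0 <= x <= INR k -> Rabs (lag_factor x k) <= 1.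
Proof.
  revert x; induction k as [|k IH]; intros x Hx.
  - rewrite lag_factor_0, Rabs_R1; lra.
  - pose proof (pos_INR k); rewrite S_INR in Hx.
    destruct (Rle_dec x (INR k)).
    + rewrite lag_factor_S; eapply Rle_trans; [apply Rabs_mul_div_le | apply IH]; try lra.
      rewrite Rabs_left1; lra.
    + rewrite lag_factor_S_pred, Rmult_comm.
      destruct k as [|k].
      * rewrite lag_factor_0, Rabs_mul_div_le, Rabs_R1; simpl in *; try lra.
        rewrite Rabs_pos_eq; lra.
      * rewrite S_INR in *; pose proof (pos_INR k).
        eapply Rle_trans; [apply Rabs_mul_div_le | apply IH]; try lra.
        rewrite Rabs_pos_eq; lra.
Qed.

Lemma sum_Rabs_lag_factor_le (r : nat) (a : R) (K : nat) : 0 <= a <= 1 ->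
  sumR (fun k => Rabs (lag_factor (INR r + a) k)) K <= 2 ^ S r + INR (K - S r).
Proof.
  intros Ha.
  enough (sumR (fun k => Rabs (lag_factor (INR r + a) k)) K <=
          sumR (fun k => lag_factor (INR (S r)) k) K + INR (K - S r))
    by (pose proof (sum_lag_factor_nat_le (S r) K); lra).
  induction K as [|K IH]; [simpl; lra|]; rewrite !sumR_S.
  pose proof (lag_factor_nat_nonneg (S r) K).
  destruct (le_lt_dec K r) as [HKr|HKr].
  - replace (S K - S r)%nat with (K - S r)%nat by lia.
    pose proof (lag_factor_mono r a K Ha HKr); rewrite S_INR in *.
    rewrite Rabs_pos_eq; lra.
  - replace (S K - S r)%nat with (S (K - S r)) by lia; rewrite (S_INR (K - S r)).
    enough (Rabs (lag_factor (INR r + a) K) <= 1) by lra.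
    apply Rabs_lag_factor_le_1.
    assert (INR r + 1 <= INR K) by (rewrite <- S_INR; apply le_INR; lia).
    pose proof (pos_INR r); lra.
Qed.

(* |l(p + b, p + 2)| = (1 + b) ... (p + b) * b (1 - b) / (p + 2)! <= (p + 1)! / 4 / (p + 2)! *)
Lemma Rabs_lag_factor_next_le (p : nat) (b : R) : 0 <= b <= 1 ->
  Rabs (lag_factor (INR p + b) (p + 2)) <= / (4 * (INR p + 2)).
Proof.
  intros Hb; induction p as [|p IH].
  - change (0 + 2)%nat with 2%nat; rewrite !lag_factor_S, lag_factor_0; simpl INR.
    replace (1 * (0 + b - 0) / (0 + 1) * (0 + b - 1) / (1 + 1)) with (b * (b - 1) / 2)
      by field.
    replace (/ (4 * (0 + 2))) with (1 / 8) by field.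
    apply Rabs_le; split; [pose proof (Rle_0_sqr (b - / 2)); unfold Rsqr in *|]; nra.
  - replace (S p + 2)%nat with (S (p + 2)) by lia.
    rewrite lag_factor_S_pred.
    replace (INR (S p) + b - 1) with (INR p + b) by (rewrite S_INR; ring).
    replace (INR (p + 2) + 1) with (INR p + 3) by (rewrite plus_INR; simpl; ring).
    replace (INR (S p) + 2) with (INR p + 3) by (rewrite S_INR; ring).
    set (X := lag_factor (INR p + b) (p + 2)) in *.
    pose proof (pos_INR p); pose proof (Rabs_pos X).
    assert (HX : (INR p + 2) * Rabs X <= / 4).
    { replace (/ 4) with ((INR p + 2) * / (4 * (INR p + 2))) by (field; lra).
      apply Rmult_le_compat_l; lra. }
    rewrite S_INR; unfold Rdiv; rewrite !Rabs_mult, Rabs_inv.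
    rewrite (Rabs_pos_eq (INR p + 1 + b)), (Rabs_pos_eq (INR p + 3)) by lra.
    rewrite Rinv_mult; apply Rmult_le_compat_r; [left; apply Rinv_0_lt_compat; lra|].
    assert (0 <= (1 - b) * Rabs X) by (apply Rmult_le_pos; lra); lra.
Qed.

Lemma Rabs_lag_factor_far_le (p : nat) (b : R) (d : nat) : 0 <= b <= 1 ->
  Rabs (lag_factor (INR p + b) (p + 2 + d)) <= / (4 * (INR p + 2)).
Proof.
  intros Hb; induction d as [|d IH].
  - rewrite Nat.add_0_r; apply Rabs_lag_factor_next_le, Hb.
  - replace (p + 2 + S d)%nat with (S (p + 2 + d)) by lia.
    rewrite lag_factor_S; eapply Rle_trans; [apply Rabs_mul_div_le | exact IH].
    + pose proof (pos_INR (p + 2 + d)); lra.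
    + assert (INR p + 1 <= INR (p + 2 + d)) by (rewrite <- S_INR; apply le_INR; lia).
      pose proof (pos_INR p); rewrite Rabs_left1; lra.
Qed.

Lemma Rabs_lag_factor_beyond_le (r : nat) (a : R) (i : nat) :
  (2 <= r)%nat -> -1 < a < 1 -> INR r + a < INR i ->
  Rabs (lag_factor (INR r + a - 1) i) <= / (4 * INR r) /\ (r <= i)%nat.
Proof.
  intros Hr Ha Hi.
  assert (Hri : (r <= i)%nat) by (apply Nat.lt_succ_r, INR_lt; rewrite S_INR; lra).
  split; [|exact Hri].
  assert (2 <= INR r) by (apply (le_INR 2); lia).
  destruct (Rle_dec 0 a).
  - assert (r < i)%nat by (apply INR_lt; lra).
    replace (INR r + a - 1) with (INR (r - 1) + a) by (rewrite minus_INR by lia; simpl; ring).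
    replace i with (r - 1 + 2 + (i - r - 1))%nat by lia.
    eapply Rle_trans; [apply Rabs_lag_factor_far_le; lra|].
    apply Rinv_le_contravar; [lra|]; rewrite minus_INR by lia; simpl; lra.
  - replace (INR r + a - 1) with (INR (r - 2) + (1 + a)) by (rewrite minus_INR by lia; simpl; ring).
    replace i with (r - 2 + 2 + (i - r))%nat by lia.
    eapply Rle_trans; [apply Rabs_lag_factor_far_le; lra|].
    rewrite minus_INR by lia; simpl; right; f_equal; ring.
Qed.

Lemma Rabs_plus_same_sign (x y : R) : 0 <= x * y -> Rabs (x + y) = Rabs x + Rabs y.
Proof.
  intros Hxy.
  destruct (Rle_dec 0 x), (Rle_dec 0 y).
  - rewrite !Rabs_pos_eq; lra.
  - assert (x = 0) by nra; subst; rewrite Rplus_0_l, Rabs_R0; ring.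
  - assert (y = 0) by nra; subst; rewrite Rplus_0_r, Rabs_R0; ring.
  - rewrite !Rabs_left1; lra.
Qed.

Definition shift_right (B : nat -> R) (i : nat) : R :=
  match i with O => 0 | S k => B k end.

Lemma sumR_Rabs_shift_le (A B c : nat -> R) (m : nat) :
  B m = 0 ->
  (forall i, (i <= m)%nat ->
     Rabs (A i) + Rabs (shift_right B i) <= Rabs (A i + shift_right B i) + c i) ->
  sumR (fun i => Rabs (A i + B i)) (S m) <=
  sumR (fun i => Rabs (A i + shift_right B i)) (S m) + sumR c (S m).
Proof.
  intros HBm Hc.
  assert (telescope : forall k,
    sumR (fun i => Rabs (B i) - Rabs (shift_right B i)) (S k) = Rabs (B k)).
  { induction k as [|k IH]; simpl in *; [rewrite Rabs_R0; ring | rewrite IH; ring]. }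
  apply Rle_trans with (sumR (fun i =>
    (Rabs (A i + shift_right B i) + c i) + (Rabs (B i) - Rabs (shift_right B i))) (S m)).
  - apply sumR_le; intros i Hi.
    pose proof (Rabs_triang (A i) (B i)); specialize (Hc i ltac:(lia)); lra.
  - rewrite !sumR_plus, telescope, HBm, Rabs_R0; lra.
Qed.

Definition conv_abs (y z : R) (m : nat) : R :=
  sumR (fun i => Rabs (lag_factor y i * lag_factor z (m - i))) (S m).

Definition conv_shift_error (u v : R) (m : nat) : R :=
  sumR (fun i => if Rlt_dec u (INR i)
                 then 2 * Rabs (lag_factor (u - 1) i * lag_factor v (m - i)) else 0) (S m).

Definition shift_error (n : nat) (x1 x2 x3 : R) : R :=
  sumR (fun j => Rabs (lag_factor x2 j) * conv_shift_error x1 x3 (n - j)) (S n).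

Lemma conv_abs_shift_le (u v : R) (m : nat) :
  conv_abs (u - 1) (v + 1) m <= conv_abs u v m + conv_shift_error u v m.
Proof.
  set (A i := lag_factor (u - 1) i * lag_factor v (m - i)).
  set (B i := if (i <? m)%nat then lag_factor (u - 1) i * lag_factor v (m - 1 - i) else 0).
  assert (new_split : forall i, (i <= m)%nat ->
    lag_factor (u - 1) i * lag_factor (v + 1) (m - i) = A i + B i).
  { intros i Hi; unfold A, B; destruct (Nat.ltb_spec i m).
    - replace (m - i)%nat with (S (m - 1 - i)) by lia; rewrite lag_factor_pascal; ring.
    - replace i with m by lia; rewrite Nat.sub_diag, !lag_factor_0; ring. }
  assert (old_split : forall i, (i <= m)%nat ->
    lag_factor u i * lag_factor v (m - i) = A i + shift_right B i).
  { intros [|i] Hi; unfold A, B, shift_right.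
    - rewrite !lag_factor_0; ring.
    - destruct (Nat.ltb_spec i m); [|lia].
      replace (m - 1 - i)%nat with (m - S i)%nat by lia.
      replace u with (u - 1 + 1) at 1 by ring; rewrite lag_factor_pascal; ring. }
  unfold conv_abs, conv_shift_error.
  rewrite (sumR_ext _ (fun i => Rabs (A i + B i))) by (intros; rewrite new_split by lia; reflexivity).
  rewrite (sumR_ext (fun i => Rabs (lag_factor u i * _)) (fun i => Rabs (A i + shift_right B i)))
    by (intros; rewrite old_split by lia; reflexivity).
  apply sumR_Rabs_shift_le; [unfold B; rewrite Nat.ltb_irrefl; reflexivity|].
  intros i Hi; fold (A i); destruct (Rlt_dec u (INR i)) as [Hui|Hui].
  - pose proof (Rabs_triang (A i + shift_right B i) (- A i)).
    replace (A i + shift_right B i + - A i) with (shift_right B i) in * by ring.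
    rewrite Rabs_Ropp in *; lra.
  - (* For 1 <= i <= u, l(u - 1, i) = l(u - 1, i - 1) (u - i) / i, so the two pieces
       have the same sign. *)
    rewrite Rabs_plus_same_sign; [lra|].
    destruct i as [|i]; [simpl; lra|].
    unfold A, B, shift_right; destruct (Nat.ltb_spec i m); [|lia].
    replace (m - 1 - i)%nat with (m - S i)%nat by lia.
    rewrite lag_factor_S; rewrite S_INR in Hui; pose proof (pos_INR i).
    replace (lag_factor (u - 1) i * (u - 1 - INR i) / (INR i + 1) * lag_factor v (m - S i) *
             (lag_factor (u - 1) i * lag_factor v (m - S i)))
      with ((u - 1 - INR i) / (INR i + 1) * (lag_factor (u - 1) i * lag_factor v (m - S i)) ^ 2)
      by (unfold Rdiv; ring).
    apply Rmult_le_pos; [|apply pow2_ge_0].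
    unfold Rdiv; apply Rmult_le_pos; [|left; apply Rinv_0_lt_compat]; lra.
Qed.

Lemma lebesgue_fun_by_middle (n : nat) (y1 y2 y3 : R) : INR n <> 0 ->
  lebesgue_fun n (y1 / INR n) (y2 / INR n) (y3 / INR n) =
  sumR (fun j => Rabs (lag_factor y2 j) * conv_abs y1 y3 (n - j)) (S n).
Proof.
  intros Hn; unfold lebesgue_fun, lagrange_fund, conv_abs.
  replace (INR n * (y1 / INR n)) with y1 by (field; exact Hn).
  replace (INR n * (y2 / INR n)) with y2 by (field; exact Hn).
  replace (INR n * (y3 / INR n)) with y3 by (field; exact Hn).
  rewrite fold_right_Rplus_map_seq.
  rewrite (sumR_ext _ (fun i => sumR (fun j =>
    Rabs (lag_factor y1 i * lag_factor y2 j * lag_factor y3 (n - i - j))) (S (n - i))))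
    by (intros; apply fold_right_Rplus_map_seq).
  rewrite sumR_triangle_exchange.
  apply sumR_ext; intros j Hj; rewrite <- sumR_scal_l.
  apply sumR_ext; intros i Hi.
  replace (n - i - j)%nat with (n - j - i)%nat by lia; rewrite !Rabs_mult; ring.
Qed.

Lemma lebesgue_fun_shift_le (n : nat) (x1 x2 x3 : R) : INR n <> 0 ->
  lebesgue_fun n ((x1 - 1) / INR n) (x2 / INR n) ((x3 + 1) / INR n) <=
  lebesgue_fun n (x1 / INR n) (x2 / INR n) (x3 / INR n) + shift_error n x1 x2 x3.
Proof.
  intros Hn; rewrite !lebesgue_fun_by_middle by exact Hn; unfold shift_error.
  rewrite <- sumR_plus; apply sumR_le; intros j _.
  rewrite <- Rmult_plus_distr_l; apply Rmult_le_compat_l; [apply Rabs_pos|].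
  apply conv_abs_shift_le.
Qed.

Lemma conv_shift_error_le (r m : nat) (x1 x3 M : R) : 0 <= M ->
  (forall i, x1 < INR i -> Rabs (lag_factor (x1 - 1) i) <= M /\ (r <= i)%nat) ->
  conv_shift_error x1 x3 m <= 2 * M * sumR (fun k => Rabs (lag_factor x3 k)) (S m - r).
Proof.
  intros HM Hbeyond; unfold conv_shift_error.
  rewrite <- (sumR_rev_from (fun k => Rabs (lag_factor x3 k))), <- sumR_scal_l.
  apply sumR_le; intros i _; pose proof (Rabs_pos (lag_factor x3 (m - i))).
  destruct (Rlt_dec x1 (INR i)) as [Hi|Hi].
  - destruct (Hbeyond i Hi) as [HMi Hri].
    rewrite (proj2 (Nat.leb_le _ _) Hri), Rabs_mult.
    pose proof (Rabs_pos (lag_factor (x1 - 1) i)); nra.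
  - destruct (r <=? i)%nat; nra.
Qed.

Lemma shift_error_le (n N r : nat) (x1 x2 x3 M : R) :
  n = (N + r)%nat -> 0 <= M ->
  (forall i, x1 < INR i -> Rabs (lag_factor (x1 - 1) i) <= M /\ (r <= i)%nat) ->
  shift_error n x1 x2 x3 <=
  2 * M * sumR (fun j => Rabs (lag_factor x2 j)) (S N)
        * sumR (fun k => Rabs (lag_factor x3 k)) (S N).
Proof.
  intros Hn HM Hbeyond; unfold shift_error.
  set (S3 := sumR (fun k => Rabs (lag_factor x3 k)) (S N)).
  apply Rle_trans with (sumR (fun j => 2 * M * S3 *
    (if (j <? S N)%nat then Rabs (lag_factor x2 j) else 0)) (S n)).
  - apply sumR_le; intros j Hj.
    replace (2 * M * S3 * (if (j <? S N)%nat then Rabs (lag_factor x2 j) else 0))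
      with (Rabs (lag_factor x2 j) * (2 * M * (if (j <? S N)%nat then S3 else 0)))
      by (destruct (j <? S N)%nat; ring).
    apply Rmult_le_compat_l; [apply Rabs_pos|].
    eapply Rle_trans; [apply (conv_shift_error_le r); eassumption|].
    apply Rmult_le_compat_l; [lra|].
    destruct (Nat.ltb_spec j (S N)).
    + apply sumR_le_length; [intros; apply Rabs_pos | lia].
    + replace (S (n - j) - r)%nat with 0%nat by lia; simpl; lra.
  - rewrite sumR_scal_l, sumR_indicator, Nat.min_r by lia; unfold S3; lra.
Qed.

Lemma INR_succ_le_pow2 (r : nat) : INR (S r) <= 2 ^ r.
Proof.
  replace 2 with (INR 2) by reflexivity; rewrite <- pow_INR.
  apply le_INR, Nat.pow_gt_lin_r; lia.
Qed.

Lemma shifted_product_le (p q A B : R) : 1 <= p -> 1 <= q -> 2 * p <= A -> 2 * q <= B ->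
  (A + q) * (B + p) <= (p + q + 1) * (A * B).
Proof.
  intros Hp Hq HA HB.
  assert (0 <= (B - 2) * (A * p)) by (apply Rmult_le_pos; nra).
  assert (0 <= (A - 2) * (B * q)) by (apply Rmult_le_pos; nra).
  assert (p * q <= (A / 2) * (B / 2)) by (apply Rmult_le_compat; lra).
  assert (0 <= A * B * (p + q - 1)) by (apply Rmult_le_pos; nra).
  nra.
Qed.

Lemma partial_sums_product_le (r1 r2 r3 : nat) (a2 a3 : R) :
  0 <= a2 <= 1 -> 0 <= a3 <= 1 -> (r2 < r1)%nat -> (S r3 < r1)%nat ->
  2 * / (4 * INR r1)
    * sumR (fun j => Rabs (lag_factor (INR r2 + a2) j)) (S (r2 + r3 + 1))
    * sumR (fun k => Rabs (lag_factor (INR r3 + a3) k)) (S (r2 + r3 + 1))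
  <= 2 ^ (r2 + r3 + 2).
Proof.
  intros Ha2 Ha3 Hr2 Hr3.
  pose proof (sum_Rabs_lag_factor_le r2 a2 (S (r2 + r3 + 1)) Ha2) as S2.
  pose proof (sum_Rabs_lag_factor_le r3 a3 (S (r2 + r3 + 1)) Ha3) as S3.
  replace (S (r2 + r3 + 1) - S r2)%nat with (S r3) in S2 by lia.
  replace (S (r2 + r3 + 1) - S r3)%nat with (S r2) in S3 by lia.
  set (T2 := sumR _ _) in S2 |- *; set (T3 := sumR _ _) in S3 |- *.
  assert (0 <= T2) by (apply sumR_nonneg; intros; apply Rabs_pos).
  assert (0 <= T3) by (apply sumR_nonneg; intros; apply Rabs_pos).
  pose proof (INR_succ_le_pow2 r2); pose proof (INR_succ_le_pow2 r3).
  assert (1 <= INR (S r2)) by (apply (le_INR 1); lia).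
  assert (1 <= INR (S r3)) by (apply (le_INR 1); lia).
  assert (INR (S r2) + INR (S r3) + 1 <= 2 * INR r1).
  { assert (INR (S r2) <= INR r1) by (apply le_INR; lia).
    assert (INR (S r3) + 1 <= INR r1) by (rewrite <- S_INR; apply le_INR; lia); lra. }
  replace (r2 + r3 + 2)%nat with (S r2 + S r3)%nat by lia; rewrite pow_add.
  set (A := 2 ^ S r2) in *; set (B := 2 ^ S r3) in *.
  assert (2 * INR (S r2) <= A) by (unfold A; change (2 ^ S r2) with (2 * 2 ^ r2); lra).
  assert (2 * INR (S r3) <= B) by (unfold B; change (2 ^ S r3) with (2 * 2 ^ r3); lra).
  assert (0 <= A * B) by nra.
  pose proof (shifted_product_le (INR (S r2)) (INR (S r3)) A B ltac:(lra) ltac:(lra) ltac:(lra) ltac:(lra)).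
  assert (T2 * T3 <= (A + INR (S r3)) * (B + INR (S r2))) by (apply Rmult_le_compat; lra).
  assert ((INR (S r2) + INR (S r3) + 1) * (A * B) <= 2 * INR r1 * (A * B))
    by (apply Rmult_le_compat_r; lra).
  assert (0 < INR r1) by lra.
  replace (2 * / (4 * INR r1) * T2 * T3) with (T2 * T3 * / (2 * INR r1)) by (field; lra).
  apply Rle_trans with (2 * INR r1 * (A * B) * / (2 * INR r1)).
  - apply Rmult_le_compat_r; [left; apply Rinv_0_lt_compat|]; lra.
  - right; field; lra.
Qed.

Lemma lemma14_slack_nonneg (n r1 r2 r3 : nat) : (4 <= n)%nat -> (1 <= r1)%nat ->
  0 <= 2 ^ r2 / INR r1 - 1
       + match r2 with
         | O => 2 ^ (r3 + 1) * ln (INR n)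
         | S _ => 2 ^ r3
         end.
Proof.
  intros Hn Hr1.
  assert (0 < 2 ^ r2 / INR r1)
    by (apply Rdiv_lt_0_compat; [apply pow_lt; lra | apply (lt_INR 0); lia]).
  destruct r2 as [|r2].
  - assert (1 <= ln (INR n)).
    { rewrite <- (ln_exp 1) at 1; pose proof exp_le_3.
      apply Rlt_le, ln_increasing; [apply exp_pos|].
      apply Rle_lt_trans with (INR 3); [simpl; lra | apply lt_INR; lia]. }
    pose proof (INR_succ_le_pow2 (r3 + 1)); pose proof (pos_INR (r3 + 1)).
    rewrite S_INR in *; nra.
  - pose proof (INR_succ_le_pow2 r3); pose proof (pos_INR r3); rewrite S_INR in *; lra.
Qed.

Theorem lemma14 (n r1 r2 r3 : nat) (a1 a2 a3 : R) :
  (4 <= n)%nat ->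
  (r1 + r2 + r3 = n - 1)%nat ->
  -1 < a1 < 1 -> 0 <= a2 < 1 -> 0 <= a3 < 1 ->
  a1 + a2 + a3 = 1 ->
  INR r1 - 1 + a1 >= INR r2 + a2 ->
  INR r1 - 1 + a1 >= INR r3 + 1 + a3 ->
  frakL n (r1 - 1) r2 (r3 + 1) a1 a2 a3 <=
    frakL n r1 r2 r3 a1 a2 a3 + 2 ^ (r2 + r3 + 2) + 2 ^ r2 / INR r1 - 1
    + match r2 with
      | O => 2 ^ (r3 + 1) * ln (INR n)
      | S _ => 2 ^ r3
      end.
Proof.
  intros Hn Hsum Ha1 Ha2 Ha3 _ H12 H13.
  assert (Hr2 : (r2 < r1)%nat) by (apply INR_lt; lra).
  assert (Hr3 : (S r3 < r1)%nat) by (apply INR_lt; rewrite S_INR; lra).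
  pose proof (lemma14_slack_nonneg n r1 r2 r3 Hn ltac:(lia)).
  enough (frakL n (r1 - 1) r2 (r3 + 1) a1 a2 a3 <= frakL n r1 r2 r3 a1 a2 a3 + 2 ^ (r2 + r3 + 2))
    by lra.
  unfold frakL.
  rewrite minus_INR, plus_INR by lia.
  replace (INR r1 - INR 1 + a1) with (INR r1 + a1 - 1) by (simpl; ring).
  replace (INR r3 + INR 1 + a3) with (INR r3 + a3 + 1) by (simpl; ring).
  eapply Rle_trans; [apply lebesgue_fun_shift_le; apply not_0_INR; lia|].
  apply Rplus_le_compat_l.
  eapply Rle_trans.
  - apply (shift_error_le n (r2 + r3 + 1) r1 _ _ _ (/ (4 * INR r1))); [lia| |].
    + apply Rlt_le, Rinv_0_lt_compat.
      assert (2 <= INR r1) by (apply (le_INR 2); lia); lra.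
    + intros i Hi; apply Rabs_lag_factor_beyond_le; [lia | lra | exact Hi].
  - apply partial_sums_product_le; lra || lia.
Qed.
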